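(* For every integer $x\ge 3$, $$s^-(x+1)\;\ge\;s^-(x)+\frac{\log 2}{x}.$$
   Context: A square is a nonempty word of the form $uu$; a word is square-free if no contiguous subword of it is a square. $\omega_n^-(x)$ is the number of square-free words of length $n$ over an $x$-letter alphabet and $s^-(x)=\lim_{n\to\infty}\frac1n\log\omega_n^-(x)$ (this limit exists). *)

From Stdlib Require Import Reals.
From Coquelicot Require Import Coquelicot.
From mathcomp Require Import all_boot.

Set Implicit Arguments.
Unset Strict Implicit.
Unset Printing Implicit Defensive.
Local Open Scope nat_scope.

Definition is_square {T : eqType} (u : seq T) : bool :=
  (0 < size u)%N && ~~ odd (size u) && (take (size u)./2 u == drop (size u)./2 u).

Definition square_free {T : eqType} (w : seq T) : bool :=
  [forall i : 'I_(size w).+1, forall l : 'I_(size w).+1,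
     ~~ is_square (take l (drop i w))].

Definition omega_sf (n x : nat) : nat :=
  #|[set t : n.-tuple 'I_x | square_free t]|.

Definition s_sf (x : nat) : R :=
  real (Lim_seq (fun n : nat => Rdiv (ln (INR (omega_sf n x))) (INR n))).

From Stdlib Require Import Reals Lra.
From Coquelicot Require Import Coquelicot.
From mathcomp Require Import all_boot.

(* Every square-free word of length n over x letters has a letter occurring at
   least n %/ x times.  Replacing any subset of those occurrences by a fresh
   letter gives distinct square-free words over x + 1 letters, hence
   omega_n(x) * 2^(n %/ x) <= x * omega_n(x + 1).  Taking logarithms, dividing
   by n and letting n grow gives the inequality; Thue's square-free ternary word
   keeps omega_n(x) positive, so the normalised logarithms stay in [0, ln x]. *)

Set Implicit Arguments.
Unset Strict Implicit.
Unset Printing Implicit Defensive.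

Local Open Scope nat_scope.

Lemma is_square_map (T U : eqType) (f : T -> U) (u : seq T) :
  is_square u -> is_square (map f u).
Proof.
rewrite /is_square size_map -map_take -map_drop.
by case/andP => /andP[-> ->] /eqP ->; rewrite eqxx.
Qed.

Lemma square_free_map (T U : eqType) (f : T -> U) (s : seq T) :
  square_free (map f s) -> square_free s.
Proof.
rewrite /square_free size_map => /forallP sf_fs.
apply/forallP => i; apply/forallP => l.
have := forallP (sf_fs i) l; rewrite -map_drop -map_take; apply: contra.
exact: is_square_map.
Qed.

(* Parity of the binary digit sum of [n]; [n] is enough fuel since the
   argument is halved at each step. *)
Fixpoint thue_morse_fuel (fuel n : nat) : bool :=
  if fuel is fuel'.+1 then
    (if n is 0 then false else odd n (+) thue_morse_fuel fuel' n./2)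
  else false.

Definition thue_morse n := thue_morse_fuel n n.

Lemma thue_morse_fuel_enough f g n :
  n <= f -> n <= g -> thue_morse_fuel f n = thue_morse_fuel g n.
Proof.
elim: f g n => [|f IH] [|g] [|n] //= nf ng.
have uphalf_le m : uphalf m <= m by rewrite leq_uphalf_double -addnn leq_addr.
by rewrite (IH g) // (leq_trans (uphalf_le n)).
Qed.

Lemma thue_morse_half n : 0 < n -> thue_morse n = odd n (+) thue_morse n./2.
Proof.
case: n => // n _; rewrite /thue_morse /=; congr addb.
by apply: thue_morse_fuel_enough; rewrite // leq_uphalf_double -addnn leq_addr.
Qed.

Lemma thue_morse_bit_double (b : bool) m :
  thue_morse (b + m.*2) = b (+) thue_morse m.
Proof.
case: b; last first.
  case: m => [|m] //; rewrite add0n thue_morse_half ?double_gt0 //.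
  by rewrite doubleK odd_double.
by rewrite thue_morse_half ?addn_gt0 // half_bit_double oddD odd_double.
Qed.

Lemma thue_morse_even_succ j : ~~ odd j -> thue_morse j.+1 = ~~ thue_morse j.
Proof.
move=> ej; rewrite -(even_halfK ej) -add1n (thue_morse_bit_double true).
by rewrite -[_.*2]add0n (thue_morse_bit_double false).
Qed.

(* Thue's theorem: the Thue-Morse word has no overlap [a v a v a] of period
   [p].  An odd period is impossible because the word alternates inside pairs
   [2m, 2m+1]; an even period descends to period [p/2] via the morphism. *)
Lemma thue_morse_overlap_free p i : 0 < p ->
  ~ (forall k, k <= p -> thue_morse (i + k) = thue_morse (i + k + p)).
Proof.
elim/ltn_ind: p i => p IH i p0 per.
case: (boolP (odd p)) => op.
- have alt k : k < p -> thue_morse (i + k).+1 = ~~ thue_morse (i + k).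
    move=> kp; case: (boolP (odd (i + k))) => o; last exact: thue_morse_even_succ.
    have e : ~~ odd (i + k + p) by rewrite oddD o op.
    have := thue_morse_even_succ e.
    by rewrite -addSn -addnS -(per k.+1 kp) -(per k (ltnW kp)) addnS.
  have tm_from_i k : k <= p -> thue_morse (i + k) = thue_morse i (+) odd k.
    elim: k => [|k IHk] kp; first by rewrite addn0 addbF.
    by rewrite addnS alt // IHk ?(ltnW kp) //= addbN.
  have := per 0 (leq0n _); rewrite addn0 (tm_from_i p (leqnn p)) op addbT.
  by case: (thue_morse i).
- have pe : p = (p./2).*2 by rewrite even_halfK.
  have q0 : 0 < p./2 by rewrite -double_gt0 -pe.
  apply: (IH p./2 _ i./2 q0).
    by rewrite {2}pe -addnn -{1}[p./2]addn0 ltn_add2l.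
  move=> k kq.
  have h : thue_morse (i + k.*2) = thue_morse (i + k.*2 + p./2.*2).
    by rewrite -pe; apply: per; rewrite pe leq_double.
  have e1 : i + k.*2 = odd i + (i./2 + k).*2.
    by rewrite !doubleD !addnA odd_double_half.
  have e2 : i + k.*2 + p./2.*2 = odd i + (i./2 + k + p./2).*2.
    by rewrite !doubleD !addnA odd_double_half.
  move: h; rewrite e2 e1 !thue_morse_bit_double.
  by case: (odd i) => /=; [move/negb_inj|].
Qed.

Definition ternary_thue n : nat := thue_morse n.+1 + 1 - thue_morse n.

Lemma ternary_thue_lt3 n : ternary_thue n < 3.
Proof. by rewrite /ternary_thue; case: (thue_morse n.+1); case: (thue_morse n). Qed.

(* Along a square of period [L] the increments of [thue_morse] repeat, which
   forces an overlap of period [L] in the Thue-Morse word. *)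
Lemma ternary_thue_no_square i L : 0 < L ->
  ~ (forall k, k < L -> ternary_thue (i + k) = ternary_thue (i + k + L)).
Proof.
move=> L0 per.
have shift k : k <= L ->
    thue_morse (i + k + L) + thue_morse i = thue_morse (i + L) + thue_morse (i + k).
  elim: k => [|k IHk] kL; first by rewrite addn0 addnC.
  have := per k kL; have := IHk (ltnW kL); rewrite /ternary_thue !addnS addSn.
  move: (thue_morse (i + k + L)) (thue_morse (i + k + L).+1) (thue_morse (i + k)).
  move: (thue_morse (i + k).+1) (thue_morse i) (thue_morse (i + L)).
  by do 6!case.
apply: (@thue_morse_overlap_free L i L0) => k kL.
have := shift k kL; have := shift L (leqnn L).
move: (thue_morse (i + k + L)) (thue_morse (i + k)) (thue_morse i).
move: (thue_morse (i + L)) (thue_morse (i + L + L)).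
by do 5!case.
Qed.

Lemma square_free_ternary_thue n : square_free (mkseq ternary_thue n).
Proof.
apply/forallP => -[i Hi]; apply/forallP => -[l Hl]; apply/negP => /=.
set u := take l (drop i (mkseq ternary_thue n)).
have nth_u j : j < size u -> nth 0 u j = ternary_thue (i + j).
  rewrite /u size_take_min size_drop size_mkseq leq_min => /andP[jl jn].
  by rewrite nth_take // nth_drop nth_mkseq // -ltn_subRL.
case/andP => /andP[u0 ue] /eqP halves.
have uL : size u = (size u)./2 + (size u)./2 by rewrite addnn even_halfK.
have L0 : 0 < (size u)./2 by rewrite -double_gt0 -addnn -uL.
apply: (@ternary_thue_no_square i _ L0) => k kL.
have kN : k < size u by rewrite uL ltn_addr.
have := congr1 (fun s => nth 0 s k) halves.
rewrite nth_take // nth_drop nth_u // nth_u; last by rewrite {2}uL ltn_add2l.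
by rewrite (addnC (size u)./2 k) addnA.
Qed.

Lemma omega_sf_gt0 n x : 3 <= x -> 0 < omega_sf n x.
Proof.
move=> hx.
have cx j : ternary_thue j < x by exact: leq_trans (ternary_thue_lt3 j) hx.
pose w := mkseq (fun j => Ordinal (cx j)) n.
have sw : size w == n by rewrite size_mkseq.
rewrite /omega_sf card_gt0; apply/set0Pn; exists (Tuple sw); rewrite inE /=.
apply: (@square_free_map _ _ val); rewrite /w /mkseq -map_comp.
exact: square_free_ternary_thue.
Qed.

Lemma omega_sf_le_exp n x : omega_sf n x <= x ^ n.
Proof. by rewrite /omega_sf (leq_trans (max_card _)) // card_tuple card_ord. Qed.

Section Recoloring.
Variables n x : nat.
Hypothesis x_gt0 : 0 < x.

Definition sf_words := [set t : n.-tuple 'I_x | square_free t].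

Definition occurrences (w : n.-tuple 'I_x) (a : 'I_x) : {set 'I_n} :=
  [set i | tnth w i == a].

Definition frequent_sf_words (a : 'I_x) :=
  [set w in sf_words | n %/ x <= #|occurrences w a|].

Lemma sum_card_occurrences w : \sum_a #|occurrences w a| = n.
Proof.
rewrite -[RHS](card_ord n) -sum1_card (partition_big (tnth w) predT) //=.
by apply: eq_bigr => a _; rewrite sum1dep_card; apply: eq_card => i; rewrite !inE.
Qed.

Lemma exists_frequent_letter w : exists a, n %/ x <= #|occurrences w a|.
Proof.
have [a _ amax] :=
  @arg_maxnP _ (Ordinal x_gt0) xpredT (fun a => #|occurrences w a|) isT.
exists a; rewrite -(mulKn #|occurrences w a| x_gt0) leq_div2r //.
rewrite -{1}(sum_card_occurrences w) -[x in x * _]card_ord -sum_nat_const.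
by apply: leq_sum => b _; exact: amax.
Qed.

(* Square-freeness survives recoloring occurrences of a letter [a] with the
   fresh letter [x] = [ord_max], since merging [x] back into [a] undoes it. *)
Definition recolor (p : n.-tuple 'I_x * {set 'I_n}) : n.-tuple 'I_x.+1 :=
  [tuple if i \in p.2 then ord_max else widen_ord (leqnSn x) (tnth p.1 i) | i < n].

Section FixedLetter.
Variable a : 'I_x.

Definition recolorable :=
  [set p : n.-tuple 'I_x * {set 'I_n} |
     (p.1 \in frequent_sf_words a) && (p.2 \subset occurrences p.1 a)].

Definition merge_fresh_into (c : 'I_x.+1) : 'I_x := insubd a (val c).

Lemma merge_recolor p : p \in recolorable -> map merge_fresh_into (recolor p) = p.1.
Proof.
rewrite inE => /andP[_ /subsetP sub].
have -> : map merge_fresh_into (recolor p) = map_tuple merge_fresh_into (recolor p) by [].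
congr val; apply: eq_from_tnth => i; rewrite tnth_map tnth_mktuple.
apply: val_inj; rewrite /merge_fresh_into val_insubd.
case: (boolP (i \in p.2)) => iS /=; last by rewrite ltn_ord.
by have := sub i iS; rewrite ltnn inE => /eqP ->.
Qed.

Lemma recolor_inj : {in recolorable &, injective recolor}.
Proof.
move=> [w S] [w' S'] pD qD E.
have wE : w = w'.
  by apply: val_inj; have := merge_recolor pD; rewrite E (merge_recolor qD).
suff -> : S = S' by rewrite wE.
apply/setP => i; have := congr1 (fun t => nat_of_ord (tnth t i)) E.
rewrite !tnth_mktuple; case: (i \in S); case: (i \in S') => //= eq_x.
- by have := ltn_ord (tnth w' i); rewrite -eq_x ltnn.
- by have := ltn_ord (tnth w i); rewrite eq_x ltnn.
Qed.

Lemma card_recolorable_ge : #|frequent_sf_words a| * 2 ^ (n %/ x) <= #|recolorable|.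
Proof.
rewrite -sum_nat_const -sum1_card.
rewrite (partition_big fst (mem (frequent_sf_words a))) => [|p]; last first.
  by rewrite inE => /andP[].
apply: leq_sum => w wA /=.
have pair_inj : injective (fun S : {set 'I_n} => (w, S)) by move=> S1 S2 [].
apply: (@leq_trans #|powerset (occurrences w a)|).
  by rewrite card_powerset leq_pexp2l //; move: wA; rewrite inE => /andP[].
rewrite -(card_imset _ pair_inj) sum1dep_card.
apply: subset_leq_card; apply/subsetP => _ /imsetP [S SP ->].
by move: wA; rewrite !inE /= eqxx andbT -powersetE SP andbT.
Qed.

Lemma card_recolorable_le : #|recolorable| <= omega_sf n x.+1.
Proof.
rewrite -(card_in_imset recolor_inj) /omega_sf; apply: subset_leq_card.
apply/subsetP => _ /imsetP [p pD ->]; rewrite inE.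
apply: (@square_free_map _ _ merge_fresh_into); rewrite (merge_recolor pD).
by move: pD; rewrite !inE => /andP[/andP[]].
Qed.
End FixedLetter.

Lemma omega_sf_mul_exp2_le : omega_sf n x * 2 ^ (n %/ x) <= x * omega_sf n x.+1.
Proof.
have cover : omega_sf n x <= \sum_a #|frequent_sf_words a|.
  rewrite /omega_sf -/sf_words -sum1_card.
  apply: (@leq_trans (\sum_(w in sf_words) \sum_a (w \in frequent_sf_words a))).
    apply: leq_sum => w wA; have [a ha] := exists_frequent_letter w.
    by rewrite (bigD1 a) //= inE wA ha.
  rewrite exchange_big /=; apply: leq_sum => a _.
  rewrite -sum1_card big_mkcond /= [X in _ <= X]big_mkcond /=.
  by apply: leq_sum => w _; case: ifP => //; rewrite inE => ->; case: (w \in sf_words).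
apply: (@leq_trans ((\sum_a #|frequent_sf_words a|) * 2 ^ (n %/ x))).
  by rewrite leq_mul2r cover orbT.
rewrite big_distrl /= -[x in x * _]card_ord -sum_nat_const.
by apply: leq_sum => a _; exact: leq_trans (card_recolorable_ge a) (card_recolorable_le a).
Qed.
End Recoloring.

Local Open Scope R_scope.

Lemma INR_leq (a b : nat) : (a <= b)%N -> INR a <= INR b.
Proof. by move/leP; apply: le_INR. Qed.

Lemma INR_muln (a b : nat) : INR (a * b)%N = INR a * INR b.
Proof. by rewrite mulnE mult_INR. Qed.

Lemma INR_expn (a k : nat) : INR (a ^ k)%N = INR a ^ k.
Proof.
by elim: k => [|k IH]; rewrite ?expn0 // expnS INR_muln IH.
Qed.

Lemma ln_ge0 r : 1 <= r -> 0 <= ln r.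
Proof. by move=> r1; rewrite -ln_1; apply: ln_le; lra. Qed.

Definition sf_rate x n := ln (INR (omega_sf n x)) / INR n.

Section Rate.
Variable x : nat.
Hypothesis x_ge3 : (3 <= x)%N.

Let x_gt0 : (0 < x)%N.
Proof. exact: leq_trans x_ge3. Qed.

Let INR_x_ge3 : 3 <= INR x.
Proof. by have := INR_leq x_ge3; rewrite /=; lra. Qed.

Let omega_ge1 k n : (x <= k)%N -> 1 <= INR (omega_sf n k).
Proof. by move=> xk; apply: (INR_leq (omega_sf_gt0 n (leq_trans x_ge3 xk))). Qed.

Lemma sf_rate_bounds n : 0 <= sf_rate x n <= ln (INR x).
Proof.
have o1 := omega_ge1 n (leqnn x).
rewrite /sf_rate; case: n o1 => [|n] o1.
  by rewrite /= Rdiv_0_r; split; [lra | apply: ln_ge0; lra].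
have n_gt0 : 0 < INR n.+1 by apply: lt_0_INR; apply/ltP.
have ln_omega_le : ln (INR (omega_sf n.+1 x)) <= INR n.+1 * ln (INR x).
  rewrite -ln_pow; last lra.
  by apply: ln_le; [lra | rewrite -INR_expn; apply/INR_leq/omega_sf_le_exp].
split; first by apply: Rdiv_le_0_compat => //; apply: ln_ge0.
by apply/Rle_div_l => //; lra.
Qed.

Lemma ln_omega_sf_succ n :
  ln (INR (omega_sf n x)) + INR (n %/ x) * ln 2
  <= ln (INR x) + ln (INR (omega_sf n x.+1)).
Proof.
have := INR_leq (omega_sf_mul_exp2_le n x_gt0).
rewrite !INR_muln INR_expn /= => bound.
have o1 := omega_ge1 n (leqnn x); have o2 := omega_ge1 n (leqnSn x).
have p2 : 0 < 2 ^ (n %/ x) by apply: pow_lt; lra.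
have := ln_le _ _ (Rmult_lt_0_compat _ _ (ltac:(lra) : 0 < INR (omega_sf n x)) p2) bound.
by rewrite !ln_mult ?ln_pow; lra.
Qed.

Lemma sf_rate_succ n : (0 < n)%N ->
  sf_rate x n + ln 2 / INR x - (ln 2 + ln (INR x)) / INR n <= sf_rate x.+1 n.
Proof.
move=> n_gt0.
have n_pos : 0 < INR n by apply: lt_0_INR; apply/ltP.
have ln2_pos : 0 < ln 2 by rewrite -ln_1; apply: ln_increasing; lra.
have div_lb : INR n / INR x - 1 <= INR (n %/ x).
  have : (n <= n %/ x * x + x)%N.
    by rewrite {1}(divn_eq n x) leq_add2l ltnW // ltn_pmod.
  move/INR_leq; rewrite plus_INR INR_muln => h.
  apply: (Rmult_le_reg_r (INR x)); first lra.
  by rewrite Rmult_minus_distr_r Rmult_1_l /Rdiv Rmult_assoc Rinv_l; lra.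
have := ln_omega_sf_succ n; rewrite /sf_rate.
set a := ln (INR (omega_sf n x)); set b := ln (INR (omega_sf n x.+1)) => key.
apply: (Rmult_le_reg_r (INR n)) => //.
have -> : (a / INR n + ln 2 / INR x - (ln 2 + ln (INR x)) / INR n) * INR n
          = a + ln 2 * (INR n / INR x - 1) - ln (INR x) by field; lra.
have -> : b / INR n * INR n = b by field; lra.
nra.
Qed.
End Rate.

Lemma eventually_div_INR_le C eps : 0 < eps -> eventually (fun n => C / INR n <= eps).
Proof.
move=> eps_gt0; have [N HN] := INR_archimed eps C eps_gt0.
exists N.+1 => n /leP Nn.
have N_le : INR N.+1 <= INR n by apply: INR_leq.
rewrite S_INR in N_le.
have n_pos : 0 < INR n by have := pos_INR N; lra.
by apply/Rle_div_l => //; nra.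
Qed.

Lemma is_LimSup_seq_shift u (l c : R) :
  is_LimSup_seq u l -> is_LimSup_seq (fun n => u n + c) (l + c).
Proof.
move=> lim eps; have [often ev] := lim eps; split.
  by move=> N; have [n [nN hn]] := often N; exists n; split => //; lra.
by case: ev => N hN; exists N => n nN; have := hN n nN; lra.
Qed.

Lemma is_LimInf_seq_shift u (l c : R) :
  is_LimInf_seq u l -> is_LimInf_seq (fun n => u n + c) (l + c).
Proof.
move=> lim eps; have [often ev] := lim eps; split.
  by move=> N; have [n [nN hn]] := often N; exists n; split => //; lra.
by case: ev => N hN; exists N => n nN; have := hN n nN; lra.
Qed.

Section BoundedSequence.
Variables (u : nat -> R) (lo hi : R).
Hypothesis u_bounded : forall n, lo <= u n <= hi.

Lemma is_LimSup_seq_bounded : is_LimSup_seq u (real (LimSup_seq u)).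
Proof.
have lo_le : Rbar_le lo (LimSup_seq u).
  rewrite -(LimSup_seq_const lo); apply: LimSup_le.
  by exists 0%N => n _; case: (u_bounded n).
have le_hi : Rbar_le (LimSup_seq u) hi.
  rewrite -(LimSup_seq_const hi); apply: LimSup_le.
  by exists 0%N => n _; case: (u_bounded n).
by move: lo_le le_hi; rewrite /LimSup_seq; case: ex_LimSup_seq => -[l| |].
Qed.

Lemma is_LimInf_seq_bounded : is_LimInf_seq u (real (LimInf_seq u)).
Proof.
have lo_le : Rbar_le lo (LimInf_seq u).
  rewrite -(LimInf_seq_const lo); apply: LimInf_le.
  by exists 0%N => n _; case: (u_bounded n).
have le_hi : Rbar_le (LimInf_seq u) hi.
  rewrite -(LimInf_seq_const hi); apply: LimInf_le.
  by exists 0%N => n _; case: (u_bounded n).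
by move: lo_le le_hi; rewrite /LimInf_seq; case: ex_LimInf_seq => -[l| |].
Qed.

Lemma Lim_seq_shift_bounded c :
  Lim_seq (fun n => u n + c) = Rbar.Finite (real (Lim_seq u) + c).
Proof.
have sup := is_LimSup_seq_bounded; have inf := is_LimInf_seq_bounded.
rewrite /Lim_seq (is_LimSup_seq_unique _ _ (is_LimSup_seq_shift c sup)).
rewrite (is_LimInf_seq_unique _ _ (is_LimInf_seq_shift c inf)).
rewrite (is_LimSup_seq_unique _ _ sup) (is_LimInf_seq_unique _ _ inf) /=.
by congr Rbar.Finite; field.
Qed.

Lemma Lim_seq_bounded : Lim_seq u = Rbar.Finite (real (Lim_seq u)).
Proof.
rewrite -[in RHS](Rplus_0_r (real _)) -Lim_seq_shift_bounded.
by apply: Lim_seq_ext => n; rewrite Rplus_0_r.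
Qed.
End BoundedSequence.

Lemma real_Lim_seq_le_shift (u v : nat -> R) (k lo hi lo' hi' : R) :
  (forall n, lo <= u n <= hi) -> (forall n, lo' <= v n <= hi') ->
  (forall eps, 0 < eps -> eventually (fun n => u n + (k - eps) <= v n)) ->
  real (Lim_seq u) + k <= real (Lim_seq v).
Proof.
move=> u_bounded v_bounded ev; apply: Rle_plus_epsilon => eps eps_gt0.
have := Lim_seq_le_loc _ _ (ev eps eps_gt0).
rewrite (Lim_seq_shift_bounded u_bounded) (Lim_seq_bounded v_bounded) /=; lra.
Qed.

Theorem mainTheorem9 (x : nat) (hx : (3 <= x)%nat) :
  (s_sf x + ln 2 / INR x <= s_sf x.+1)%R.
Proof.
have hx1 : (3 <= x.+1)%N := leq_trans hx (leqnSn x).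
apply: (real_Lim_seq_le_shift (sf_rate_bounds hx) (sf_rate_bounds hx1)).
move=> eps eps_gt0.
have [N small] := eventually_div_INR_le (ln 2 + ln (INR x)) eps_gt0.
exists N.+1 => n /leP Nn.
have := small n (leP (ltnW Nn)).
have := sf_rate_succ hx (leq_ltn_trans (leq0n N) Nn); lra.
Qed.
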